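(* Let $(X,d)$ be a quasi-pseudometric space and $\varphi:X\to\mathbb{R}\cup\{\infty\}$ a proper bounded below function. For $x\in X$ let $S(x)=\{y\in X:\varphi(y)+d(y,x)\le\varphi(x)\}$. The following statements are equivalent: (wEk) there exists $z\in X$ such that $\varphi(y)=\varphi(z)$ for all $y\in S(z)$; (Tak) if for every $x\in X$ with $\inf\varphi(X)<\varphi(x)$ there exists $y\in S(x)$ with $\varphi(y)<\varphi(x)$, then there exists $z\in X$ with $\varphi(z)=\inf\varphi(X)$; (Car) for every mapping $T:X\to X$ satisfying $Tx\in S(x)$ for all $x\in X$, there exists $z\in X$ with $\varphi(Tz)=\varphi(z)$.
   Context: A quasi-pseudometric on $X$ is $d:X\times X\to[0,\infty)$ with $d(x,x)=0$ and $d(x,z)\le d(x,y)+d(y,z)$ for all $x,y,z$ (symmetry not assumed). $\varphi$ is proper if $\varphi(x)<\infty$ for some $x$. *)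

(* R : realType, phi valued in extended reals \bar R
   (with the standing hypothesis that phi never takes the value -oo). *)
From mathcomp Require Import all_boot all_order all_algebra.
From mathcomp Require Import all_classical all_reals.
From mathcomp Require Export ereal.

Set Implicit Arguments.
Unset Strict Implicit.
Unset Printing Implicit Defensive.

Import Order.TTheory GRing.Theory Num.Theory.
Local Open Scope ring_scope.
Local Open Scope ereal_scope.

Definition quasi_pseudometric (R : realType) (X : Type) (d : X -> X -> R) : Prop :=
  (forall x y, (0 <= d x y)%R) /\ (forall x, d x x = 0%R) /\
  (forall x y z, (d x z <= d x y + d y z)%R).

Definition no_minus_infty (R : realType) (X : Type) (phi : X -> \bar R) : Prop :=
  forall x, phi x != -oo.

Definition proper_fun (R : realType) (X : Type) (phi : X -> \bar R) : Prop :=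
  exists x, phi x < +oo.

Definition bounded_below (R : realType) (X : Type) (phi : X -> \bar R) : Prop :=
  exists m : R, forall x, m%:E <= phi x.

Definition Sset (R : realType) (X : Type) (d : X -> X -> R) (phi : X -> \bar R)
  (x : X) : X -> Prop :=
  fun y => phi y + (d y x)%:E <= phi x.

Definition infphi (R : realType) (X : Type) (phi : X -> \bar R) : \bar R :=
  ereal_inf (range phi).

Definition wEk (R : realType) (X : Type) (d : X -> X -> R) (phi : X -> \bar R) : Prop :=
  exists z, forall y, Sset d phi z y -> phi y = phi z.

Definition Tak (R : realType) (X : Type) (d : X -> X -> R) (phi : X -> \bar R) : Prop :=
  (forall x, infphi phi < phi x -> exists y, Sset d phi x y /\ phi y < phi x) ->
  exists z, phi z = infphi phi.

Definition Car (R : realType) (X : Type) (d : X -> X -> R) (phi : X -> \bar R) : Prop :=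
  forall T : X -> X, (forall x, Sset d phi x (T x)) -> exists z, phi (T z) = phi z.

(* If wEk fails, every x has a point y of S(x) with phi y < phi x.  This is
   exactly the hypothesis of Tak, and choosing such a y for every x gives a
   map T violating the conclusion of Car; in both cases a point z produced by
   the conclusion contradicts the strict descent from z.  Conversely, a point
   z as in wEk has phi constant on S(z), so it is a minimiser under the
   hypothesis of Tak and satisfies phi (T z) = phi z for every T as in Car. *)
From mathcomp Require Import all_boot all_order all_algebra.
From mathcomp Require Import all_classical all_reals.

Set Implicit Arguments.
Unset Strict Implicit.
Unset Printing Implicit Defensive.

Import Order.TTheory GRing.Theory Num.Theory.
Local Open Scope ereal_scope.

Section WeakEkelandEquivalences.

Variables (R : realType) (X : Type) (d : X -> X -> R) (phi : X -> \bar R).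
Hypothesis d_ge0 : forall x y, (0 <= d x y)%R.

Lemma Sset_le x y : Sset d phi x y -> phi y <= phi x.
Proof. by apply: le_trans; rewrite leeDl // lee_fin. Qed.

Lemma infphi_le x : infphi phi <= phi x.
Proof. by apply: ereal_inf_lbound; exists x. Qed.

Lemma not_wEk_descent :
  ~ wEk d phi -> forall x, exists y, Sset d phi x y /\ phi y < phi x.
Proof.
move=> not_wEk x; apply: contrapT => no_descent; apply: not_wEk.
exists x => y Sxy; apply/eqP; rewrite eq_le Sset_le //=.
by rewrite leNgt; apply/negP => lt_yx; apply: no_descent; exists y.
Qed.

Lemma wEk_Tak : wEk d phi -> Tak d phi.
Proof.
move=> [z phi_const] descent; exists z; apply/eqP.
rewrite eq_le infphi_le andbT leNgt; apply/negP => /descent[y [Szy]].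
by rewrite phi_const // ltxx.
Qed.

Lemma Tak_wEk : Tak d phi -> wEk d phi.
Proof.
move=> tak; apply: contrapT => /not_wEk_descent descent.
have [z phiz_inf] := tak (fun x _ => descent x).
have [y [_]] := descent z.
by rewrite phiz_inf ltNge infphi_le.
Qed.

Lemma wEk_Car : wEk d phi -> Car d phi.
Proof. by move=> [z phi_const] T STx; exists z; apply: phi_const. Qed.

Lemma Car_wEk : Car d phi -> wEk d phi.
Proof.
move=> car; apply: contrapT => /not_wEk_descent /choice[T descentT].
have [z phiTz] := car T (fun x => proj1 (descentT x)).
by have := proj2 (descentT z); rewrite phiTz ltxx.
Qed.

End WeakEkelandEquivalences.

Theorem theorem3p8 (R : realType) (X : Type) (d : X -> X -> R) (phi : X -> \bar R) :
  quasi_pseudometric d -> no_minus_infty phi -> proper_fun phi -> bounded_below phi ->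
  (wEk d phi <-> Tak d phi) /\ (wEk d phi <-> Car d phi).
Proof.
move=> [d_ge0 _] _ _ _; split; split.
- exact: wEk_Tak.
- exact: Tak_wEk d_ge0.
- exact: wEk_Car.
- exact: Car_wEk d_ge0.
Qed.
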